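(* Every $E$-sequence is isomorphic to the evolutionary sequence of some phylogenetic quiver.
   Context: A quiver consists of a class of vertices and, for each ordered pair of vertices $(A,B)$, a set of edges $A\to B$ (loops and multiple edges allowed). An evolution of length $m\ge 0$ is a sequence $A_0\leftarrow A_1\leftarrow\cdots\leftarrow A_m$ of vertices together with edges $A_k\to A_{k-1}$ ($1\le k\le m$); $A_0$ is its initial and $A_m$ its terminal vertex. Write $A\le B$ ($A$ is an ancestor of $B$) if there is an evolution with initial vertex $A$ and terminal vertex $B$; $A,B$ are isotypic ($A\sim B$) if $A\le B$ and $B\le A$. A vertex $A$ is primitive if every ancestor of $A$ is isotypic to $A$. A full evolution for $X$ is an evolution with primitive initial vertex and terminal vertex $X$. The height $h(X)$ is the smallest length of a full evolution for $X$ ($\infty$ if none). An evolution $\alpha=(A_0\leftarrow\cdots\leftarrow A_m)$ embeds in $\beta=(B_0\leftarrow\cdots\leftarrow B_n)$ if $m\le n$ and there are $0\le r_0<\cdots<r_m\le n$ with $A_k\sim B_{r_k}$. A universal evolution for $X$ is a full evolution for $X$ embedding in every full evolution for $X$; $X$ is phylogenetic if one exists. A quiver is monotonous if $h(A)\ge h(B)$ for every edge $A\to B$; small if its isotypy classes form a set; phylogenetic if small, monotonous, and all vertices phylogenetic. Evolutionary sequence of a phylogenetic quiver $\mathcal O$: let $\mathcal O_m$ be the set of isotypy classes $[A]$ of vertices of height $m$, partially ordered by $[A]\le[B]$ iff $A\le B$; for $m\ge1$ the parental map $p:\mathcal O_m\to\mathcal O_{m-1}$ is $p([A])=[A_{m-1}]$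 where $A_0\leftarrow\cdots\leftarrow A_{m-1}\leftarrow A_m=A$ is any universal evolution for $A$ (this is well defined). The evolutionary sequence is the family of posets $(\mathcal O_m,\le)_{m\ge0}$ with the maps $p$. An $E$-sequence consists of partially ordered sets $(P_m,\le)_{m\ge0}$ and maps $p=p_m:P_m\to P_{m-1}$ ($m\ge1$) such that the partial order on $P_0$ is trivial (equality) and for all $m\ge1$ and $a,b\in P_m$, $a\le b$ implies $p(a)=p(b)$. Two $E$-sequences $P,P'$ are isomorphic if there are bijections $f_m:P_m\to P'_m$ ($m\ge0$) with $p'f_m=f_{m-1}p$ for $m\ge1$ and $a\le b\iff f_m(a)\le f_m(b)$ for all $a,b\in P_m$. *)

Set Implicit Arguments.

Section Quivers.
Variable V : Type.
Variable Edge : V -> V -> Type.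

(* An evolution A_0 <- A_1 <- ... <- A_m: length m, vertices vx 0 .. vx m
   (values beyond m are irrelevant), and edges A_{k+1} -> A_k. *)
Record evolution := Evol {
  ev_len : nat;
  ev_vx : nat -> V;
  ev_edge : forall k, k < ev_len -> Edge (ev_vx (S k)) (ev_vx k)
}.

Definition initial (e : evolution) : V := ev_vx e 0.
Definition terminal (e : evolution) : V := ev_vx e (ev_len e).

Definition ancestor (A B : V) : Prop :=
  exists e : evolution, initial e = A /\ terminal e = B.

Definition isotypic (A B : V) : Prop := ancestor A B /\ ancestor B A.

Definition primitive (A : V) : Prop :=
  forall B, ancestor B A -> isotypic B A.

Definition full_evolution (e : evolution) (X : V) : Prop :=
  primitive (initial e) /\ terminal e = X.

(* h(X) = m  (finite height); h(X) = infinity iff no m satisfies this *)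
Definition has_height (X : V) (m : nat) : Prop :=
  (exists e, full_evolution e X /\ ev_len e = m) /\
  (forall e, full_evolution e X -> m <= ev_len e).

Definition embeds (a b : evolution) : Prop :=
  ev_len a <= ev_len b /\
  exists r : nat -> nat,
    (forall k, k < ev_len a -> r k < r (S k)) /\
    r (ev_len a) <= ev_len b /\
    (forall k, k <= ev_len a -> isotypic (ev_vx a k) (ev_vx b (r k))).

Definition universal_evolution (e : evolution) (X : V) : Prop :=
  full_evolution e X /\ forall e', full_evolution e' X -> embeds e e'.

Definition phylogenetic_vertex (X : V) : Prop :=
  exists e, universal_evolution e X.

(* h(A) >= h(B) for every edge A -> B (with h = infinity allowed) *)
Definition monotonous : Prop :=
  forall A B, Edge A B -> forall m, has_height A m ->
    exists k, has_height B k /\ k <= m.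

(* Smallness is automatic: V is a type, so isotypy classes form a set. *)
Definition phylogenetic_quiver : Prop :=
  monotonous /\ forall X, phylogenetic_vertex X.

End Quivers.

Record Esequence := ESeq {
  es_P : nat -> Type;
  es_le : forall m, es_P m -> es_P m -> Prop;
  es_par : forall m, es_P (S m) -> es_P m;
  es_refl : forall m a, @es_le m a a;
  es_antisym : forall m a b, @es_le m a b -> @es_le m b a -> a = b;
  es_trans : forall m a b c, @es_le m a b -> @es_le m b c -> @es_le m a c;
  es_le0 : forall a b, @es_le 0 a b -> a = b;
  es_par_le : forall m a b, @es_le (S m) a b -> es_par a = es_par b
}.

(* The E-sequence P is isomorphic to the evolutionary sequence of the
   quiver (V, Edge), via f m : P m -> V choosing a representative of the
   isotypy class f_m(a) in O_m. *)
Definition iso_to_evolutionary_sequence (P : Esequence) (V : Type)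
    (Edge : V -> V -> Type) (f : forall m, es_P P m -> V) : Prop :=
  (forall m a, has_height Edge (f m a) m) /\
  (forall m X, has_height Edge X m -> exists a, isotypic Edge X (f m a)) /\
  (forall m a b, isotypic Edge (f m a) (f m b) -> a = b) /\
  (forall m (a b : es_P P m), @es_le P m a b <-> ancestor Edge (f m a) (f m b)) /\
  (* compatibility with parental maps: p'([f_{m+1} a]) = [f_m (p a)] *)
  (forall m (a : es_P P (S m)) (e : evolution Edge),
      universal_evolution e (f (S m) a) ->
      isotypic Edge (ev_vx e (ev_len e - 1)) (f m (@es_par P m a))).

From Stdlib Require Import Lia PeanoNat Eqdep_dec.

(* Realise an E-sequence P as the quiver whose vertices are the elements of
   all the P_m, with an edge a -> p(a) for every a and an edge b -> a whenever
   a <= b in the same P_m.  Levels never drop along an evolution, and at a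
   fixed level ancestry is exactly the order of P_m, so isotypy is equality,
   the primitive vertices are those of level 0 and the height of a vertex is
   its level.  Every edge preserves the ancestors strictly below its source
   (a <= b forces p(a) = p(b)), so every full evolution of x passes through
   the chain x, p(x), p(p(x)), ... in order: that chain is universal and its
   penultimate vertex is p(x). *)

Section QuiverFacts.
Context {V : Type} {Edge : V -> V -> Type}.

Lemma ancestor_refl (x : V) : ancestor Edge x x.
Proof.
  unshelve eexists (Evol Edge (ev_len := 0) (fun _ => x) _).
  - intros k Hk; exfalso; lia.
  - split; reflexivity.
Qed.

Lemma isotypic_refl (x : V) : isotypic Edge x x.
Proof. split; apply ancestor_refl. Qed.

Lemma ancestor_of_edge {x y : V} : Edge x y -> ancestor Edge y x.
Proof.
  intro e.
  unshelve eexists (Evol Edge (ev_len := 1)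
                      (fun k => match k with 0 => y | _ => x end) _).
  - intros [|k] Hk; [exact e | exfalso; lia].
  - split; reflexivity.
Qed.

Lemma has_height_unique {X : V} {m n} :
  has_height Edge X m -> has_height Edge X n -> m = n.
Proof.
  intros [[e [He <-]] Hm] [[e' [He' <-]] Hn].
  specialize (Hm e' He'); specialize (Hn e He); lia.
Qed.

End QuiverFacts.

Lemma strictly_increasing_gap (r : nat -> nat) M :
  (forall k, k < M -> r k < r (S k)) ->
  forall i j, i <= j <= M -> r i + (j - i) <= r j.
Proof.
  intros Hr i j; induction j as [|j IH]; intro Hij.
  - replace i with 0 by lia; lia.
  - destruct (Nat.eq_dec i (S j)) as [->|Hi]; [lia|].
    specialize (IH ltac:(lia)); specialize (Hr j ltac:(lia)); lia.
Qed.

Section EsequenceQuiver.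
Variable P : Esequence.

Definition vertex : Type := {m : nat & es_P P m}.

Definition level (x : vertex) : nat := projT1 x.

Inductive edge : vertex -> vertex -> Type :=
| edge_parent m (a : es_P P (S m)) :
    edge (existT _ (S m) a) (existT _ m (es_par P m a))
| edge_le m (a b : es_P P m) :
    es_le P m a b -> edge (existT _ m b) (existT _ m a).

Definition parent (x : vertex) : vertex :=
  match x with
  | existT _ (S m) a => existT _ m (es_par P m a)
  | _ => x
  end.

Definition ancestor_at (k : nat) (x : vertex) : vertex :=
  Nat.iter (level x - k) parent x.

Definition vertex_le (x y : vertex) : Prop :=
  exists m (a b : es_P P m),
    x = existT _ m a /\ y = existT _ m b /\ es_le P m a b.

Lemma existT_vertex_inj m (a b : es_P P m) :
  existT (es_P P) m a = existT (es_P P) m b -> a = b.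
Proof. apply inj_pair2_eq_dec, Nat.eq_dec. Qed.

Lemma level_parent x : level (parent x) = level x - 1.
Proof. destruct x as [[|m] a]; simpl; lia. Qed.

Lemma level_iter_parent i x : level (Nat.iter i parent x) = level x - i.
Proof.
  induction i as [|i IH]; simpl; [lia|].
  rewrite level_parent, IH; lia.
Qed.

Lemma level_ancestor_at k x : k <= level x -> level (ancestor_at k x) = k.
Proof. intro Hk; unfold ancestor_at; rewrite level_iter_parent; lia. Qed.

Lemma ancestor_at_level x : ancestor_at (level x) x = x.
Proof. unfold ancestor_at; rewrite Nat.sub_diag; reflexivity. Qed.

Lemma ancestor_at_succ k x :
  k < level x -> ancestor_at k x = parent (ancestor_at (S k) x).
Proof.
  intro Hk; unfold ancestor_at.
  replace (level x - k) with (S (level x - S k)) by lia.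
  apply Nat.iter_succ.
Qed.

Lemma edge_to_parent y : 1 <= level y -> edge y (parent y).
Proof. destruct y as [[|m] a]; simpl; intro H; [lia | apply edge_parent]. Qed.

Lemma edge_level y x : edge y x -> level x <= level y <= S (level x).
Proof. intro e; destruct e; simpl; lia. Qed.

Lemma edge_ancestor_at y x k :
  edge y x -> k < level y -> ancestor_at k x = ancestor_at k y.
Proof.
  intros e Hk; destruct e as [m a | m a b Hab];
    unfold ancestor_at, level in *; cbn [projT1] in *.
  - replace (S m - k) with (S (m - k)) by lia.
    rewrite Nat.iter_succ_r; reflexivity.
  - destruct m as [|m]; [lia|].
    replace (S m - k) with (S (m - k)) by lia.
    rewrite !Nat.iter_succ_r; simpl.
    rewrite (es_par_le P m a b Hab); reflexivity.
Qed.

Lemma edge_same_level y x : edge y x -> level x = level y -> vertex_le x y.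
Proof.
  intros e Hl; destruct e as [m a | m a b Hab]; simpl in Hl; [lia|].
  exists m, a, b; auto.
Qed.

Lemma vertex_le_refl x : vertex_le x x.
Proof. destruct x as [m a]; exists m, a, a; repeat split; apply es_refl. Qed.

Lemma vertex_le_trans x y z : vertex_le x y -> vertex_le y z -> vertex_le x z.
Proof.
  intros (m & a & b & -> & -> & Hab) (m' & b' & c & E & -> & Hbc).
  assert (m' = m) as -> by exact (f_equal (@projT1 _ _) (eq_sym E)).
  apply existT_vertex_inj in E as <-.
  exists m, a, c; repeat split; eapply es_trans; eauto.
Qed.

Lemma vertex_le_existT m (a b : es_P P m) :
  vertex_le (existT _ m a) (existT _ m b) -> es_le P m a b.
Proof.
  intros (m' & a' & b' & Ea & Eb & H).
  assert (m' = m) as -> by exact (f_equal (@projT1 _ _) (eq_sym Ea)).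
  apply existT_vertex_inj in Ea as ->; apply existT_vertex_inj in Eb as ->.
  exact H.
Qed.

Lemma path_level_mono n (vx : nat -> vertex) :
  (forall k, k < n -> edge (vx (S k)) (vx k)) -> level (vx 0) <= level (vx n).
Proof.
  induction n as [|n IH]; intro E; [lia|].
  pose proof (edge_level _ _ (E n ltac:(lia))).
  specialize (IH ltac:(intros; apply E; lia)); lia.
Qed.

Lemma path_same_level n (vx : nat -> vertex) :
  (forall k, k < n -> edge (vx (S k)) (vx k)) ->
  level (vx 0) = level (vx n) -> vertex_le (vx 0) (vx n).
Proof.
  induction n as [|n IH]; intros E Hl; [apply vertex_le_refl|].
  pose proof (edge_level _ _ (E n ltac:(lia))).
  pose proof (path_level_mono n vx ltac:(intros; apply E; lia)).
  apply vertex_le_trans with (vx n).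
  - apply IH; [intros; apply E | ]; lia.
  - apply edge_same_level; [apply E |]; lia.
Qed.

Lemma ancestor_level x y : ancestor edge x y -> level x <= level y.
Proof.
  intros [e [<- <-]].
  exact (path_level_mono _ _ (fun k Hk => ev_edge e Hk)).
Qed.

Lemma ancestor_same_level m (a b : es_P P m) :
  ancestor edge (existT _ m a) (existT _ m b) -> es_le P m a b.
Proof.
  intros [e [Hi Ht]]; apply vertex_le_existT.
  unfold initial, terminal in Hi, Ht; rewrite <- Hi, <- Ht.
  apply (path_same_level _ _ (fun k Hk => ev_edge e Hk)).
  rewrite Hi, Ht; reflexivity.
Qed.

Lemma isotypic_eq x y : isotypic edge x y -> x = y.
Proof.
  destruct x as [m a], y as [m' b]; intros [Hxy Hyx].
  pose proof (ancestor_level _ _ Hxy); pose proof (ancestor_level _ _ Hyx).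
  simpl in *; assert (m' = m) as -> by lia.
  f_equal; apply es_antisym; apply ancestor_same_level; assumption.
Qed.

Lemma primitive_level0 x : primitive edge x <-> level x = 0.
Proof.
  split.
  - destruct x as [[|m] a]; intro Hx; [reflexivity|].
    pose proof (isotypic_eq _ _ (Hx _ (ancestor_of_edge (edge_parent m a)))) as E.
    apply (f_equal level) in E; simpl in E; lia.
  - destruct x as [m a]; simpl; intros -> [m' b] Hb.
    pose proof (ancestor_level _ _ Hb) as Hl; simpl in Hl.
    assert (m' = 0) as -> by lia.
    rewrite (es_le0 P b a (ancestor_same_level _ _ _ Hb)).
    apply isotypic_refl.
Qed.

Lemma ancestry_edge x k :
  k < level x -> edge (ancestor_at (S k) x) (ancestor_at k x).
Proof.
  intro Hk; rewrite (ancestor_at_succ k x Hk).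
  apply edge_to_parent; rewrite level_ancestor_at; lia.
Qed.

Definition ancestry (x : vertex) : evolution edge :=
  Evol edge (ev_len := level x) (fun k => ancestor_at k x)
       (fun k => ancestry_edge x k).

Lemma ancestry_full x : full_evolution (ancestry x) x.
Proof.
  split.
  - apply primitive_level0; unfold initial; simpl.
    apply level_ancestor_at; lia.
  - apply ancestor_at_level.
Qed.

(* Levels are nondecreasing along the path; r k is the last index at level k. *)
Lemma path_through_ancestors n (vx : nat -> vertex) :
  (forall k, k < n -> edge (vx (S k)) (vx k)) -> level (vx 0) = 0 ->
  exists r : nat -> nat,
    (forall k, k < level (vx n) -> r k < r (S k)) /\
    r (level (vx n)) = n /\
    (forall k, k <= level (vx n) -> vx (r k) = ancestor_at k (vx n)).
Proof.
  intros E H0; induction n as [|n IH].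
  - exists (fun _ => 0); rewrite H0; split; [lia | split; [reflexivity |]].
    intros k Hk; replace k with 0 by lia.
    unfold ancestor_at; rewrite H0; reflexivity.
  - destruct IH as (r & Hr & Hrn & Hvx); [intros; apply E; lia |].
    pose proof (E n ltac:(lia)) as e; pose proof (edge_level _ _ e) as Hl.
    set (x := vx n) in *; set (y := vx (S n)) in *.
    exists (fun k => if k <? level y then r k else S n).
    repeat split.
    + intros k Hk; rewrite (proj2 (Nat.ltb_lt k _) Hk).
      destruct (Nat.ltb_spec (S k) (level y)); [apply Hr; lia |].
      pose proof (strictly_increasing_gap r _ Hr k (level x) ltac:(lia)); lia.
    + rewrite Nat.ltb_irrefl; reflexivity.
    + intros k Hk; destruct (Nat.ltb_spec k (level y)).
      * rewrite Hvx by lia; apply (edge_ancestor_at _ _ _ e); assumption.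
      * replace k with (level y) by lia; symmetry; apply ancestor_at_level.
Qed.

Lemma full_evolution_through_ancestors (e : evolution edge) (x : vertex) :
  full_evolution e x ->
  exists r : nat -> nat,
    (forall k, k < level x -> r k < r (S k)) /\ r (level x) = ev_len e /\
    (forall k, k <= level x -> ev_vx e (r k) = ancestor_at k x).
Proof.
  intros [Hp Ht]; apply primitive_level0 in Hp.
  unfold initial, terminal in *; rewrite <- Ht.
  exact (path_through_ancestors _ _ (fun k Hk => ev_edge e Hk) Hp).
Qed.

Lemma full_evolution_len (e : evolution edge) (x : vertex) :
  full_evolution e x -> level x <= ev_len e.
Proof.
  intro He.
  destruct (full_evolution_through_ancestors e x He) as (r & Hr & Hrn & _).
  pose proof (strictly_increasing_gap r _ Hr 0 (level x) ltac:(lia)); lia.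
Qed.

Lemma has_height_level x : has_height edge x (level x).
Proof.
  split.
  - exists (ancestry x); split; [apply ancestry_full | reflexivity].
  - intros e He; exact (full_evolution_len e x He).
Qed.

Lemma has_height_eq_level x m : has_height edge x m -> m = level x.
Proof. intro H; exact (has_height_unique H (has_height_level x)). Qed.

Lemma ancestry_universal x : universal_evolution (ancestry x) x.
Proof.
  split; [apply ancestry_full |].
  intros e He; split; [apply (full_evolution_len e x He) |].
  destruct (full_evolution_through_ancestors e x He) as (r & Hr & Hrn & Hvx).
  exists r; split; [exact Hr | split; [simpl; lia |]].
  intros k Hk; rewrite Hvx by exact Hk; apply isotypic_refl.
Qed.

Lemma universal_evolution_ancestors (e : evolution edge) (x : vertex) :
  universal_evolution e x ->
  ev_len e = level x /\ forall k, k <= level x -> ev_vx e k = ancestor_at k x.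
Proof.
  intros [Hf Hu].
  pose proof (full_evolution_len e x Hf).
  destruct (Hu _ (ancestry_full x)) as [Hlen _]; simpl in Hlen.
  destruct (full_evolution_through_ancestors e x Hf) as (r & Hr & Hrn & Hvx).
  split; [lia |].
  intros k Hk.
  pose proof (strictly_increasing_gap r _ Hr 0 k ltac:(lia)).
  pose proof (strictly_increasing_gap r _ Hr k (level x) ltac:(lia)).
  replace k with (r k) at 1 by lia; apply Hvx; exact Hk.
Qed.

Lemma universal_evolution_penultimate (e : evolution edge) (x : vertex) :
  universal_evolution e x -> ev_vx e (ev_len e - 1) = parent x.
Proof.
  intro Hu; destruct (universal_evolution_ancestors e x Hu) as [-> Hvx].
  rewrite Hvx by lia.
  destruct (Nat.eq_dec (level x) 0) as [H0 | Hpos].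
  - destruct x as [m a]; simpl in H0; subst m.
    unfold ancestor_at; reflexivity.
  - rewrite ancestor_at_succ by lia.
    replace (S (level x - 1)) with (level x) by lia.
    rewrite ancestor_at_level; reflexivity.
Qed.

End EsequenceQuiver.

Theorem theorem8p1 (P : Esequence) :
  exists (V : Type) (Edge : V -> V -> Type) (f : forall m, es_P P m -> V),
    phylogenetic_quiver Edge /\ iso_to_evolutionary_sequence P Edge f.
Proof.
  exists (vertex P), (edge P), (fun m a => existT _ m a).
  split; [split | split; [| split; [| split; [| split]]]].
  - intros A B e m Hm; rewrite (has_height_eq_level _ _ _ Hm).
    exists (level P B); split; [apply has_height_level | apply edge_level, e].
  - intro X; exists (ancestry P X); apply ancestry_universal.
  - intros m a; apply (has_height_level P (existT _ m a)).
  - intros m [m' a] HX; apply has_height_eq_level in HX; simpl in HX; subst m'.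
    exists a; apply isotypic_refl.
  - intros m a b Hab; exact (existT_vertex_inj P m a b (isotypic_eq P _ _ Hab)).
  - intros m a b; split; [| apply ancestor_same_level].
    intro Hab; exact (ancestor_of_edge (edge_le P m a b Hab)).
  - intros m a e Hu; rewrite (universal_evolution_penultimate P e _ Hu).
    apply isotypic_refl.
Qed.
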